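(* Let $k\ge 2$ be an integer and let $d_1\ge d_2\ge\cdots\ge d_k\ge 2$ be integers. If $r\ge d_1+k-1$, then for all sufficiently large $n$, $$ex\Big(n,K_r,\bigcup_{i=1}^k S_{d_i}\Big)\le \max_{1\le i\le k}\left\{\frac{d_i-1}{r-i+1}(n-i+1)\right\}.$$
   Context: $S_\ell$ denotes the star $K_{1,\ell}$ with $\ell$ edges, and $\bigcup_{i=1}^k S_{d_i}$ denotes the star forest that is the vertex-disjoint union of $S_{d_1},\dots,S_{d_k}$. For graphs $H$ and $F$, the generalized Turán number $ex(n,H,F)$ is the maximum number of copies of $H$ in an $n$-vertex graph containing no copy of $F$ as a subgraph; $K_r$ is the complete graph on $r$ vertices. *)

From mathcomp Require Import all_boot all_order all_algebra.
Set Implicit Arguments. Unset Strict Implicit. Unset Printing Implicit Defensive.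
Import Order.TTheory GRing.Theory Num.Theory.

Definition graph (n : nat) := {ffun 'I_n * 'I_n -> bool}.

Definition simple_graph n (G : graph n) : bool :=
  [forall x, ~~ G (x, x)] && [forall x, forall y, G (x, y) == G (y, x)].

Definition contains_copy (T : finType) (F : rel T) n (G : graph n) : bool :=
  [exists f : {ffun T -> 'I_n},
     injectiveb f && [forall x, forall y, F x y ==> G (f x, f y)]].

Definition num_Kr n (G : graph n) (r : nat) : nat :=
  #|[set S : {set 'I_n} | (#|S| == r) &&
       [forall x in S, forall y in S, (x != y) ==> G (x, y)]]|.

Definition ex_Kr (n r : nat) (T : finType) (F : rel T) : nat :=
  \max_(G : graph n | simple_graph G && ~~ contains_copy F G) num_Kr G r.

(* the star forest S_{d_0} ∪ ... ∪ S_{d_{k-1}}: component i has center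
   (i, None) and leaves (i, Some j), j < d i. *)
Definition star_forest_vertex (k : nat) (d : nat -> nat) :=
  {i : 'I_k & option 'I_(d i)}.

Definition star_forest_rel (k : nat) (d : nat -> nat) :
  rel (star_forest_vertex k d) :=
  fun u v => (tag u == tag v) &&
    ((tagged u == None) && (tagged v != None)
     || (tagged u != None) && (tagged v == None)).

From mathcomp Require Import all_boot all_order all_algebra zify.
Import Order.TTheory GRing.Theory Num.Theory.
Set Implicit Arguments. Unset Strict Implicit. Unset Printing Implicit Defensive.

(* Call a vertex a hub if its degree is at least hub_degree = k + 2 k d_1 + d_1.
   Stars centred at hubs can always be completed greedily at the very end, so a
   graph without the star forest has fewer than k hubs.
   - If it has at most k-2 hubs, every K_r has more than d_1 non-hub vertices and
     every non-hub vertex lies in at most 2^hub_degree copies of K_r.  Hence, if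
     there are more than k r 2^hub_degree copies, one can greedily pick k - |hubs|
     of them with pairwise disjoint non-hub parts; each part is a star, and
     together with stars at the hubs they form the forest.  So the number of K_r
     is bounded, which is below the term i = 1 of the maximum for large n.
   - If it has exactly k-1 hubs, every non-hub vertex has fewer than d_k
     non-hub neighbours (else it would centre the missing star).  This forces
     every K_r to consist of all hubs plus a non-hub vertex u and its
     neighbours, so the non-hub parts of the K_r are pairwise disjoint sets of
     size r-k+1, which gives the term i = k of the maximum. *)

Section FinsetFacts.
Variable T : finType.
Implicit Types A B U X : {set T}.

Lemma exists_subset_card A m :
  m <= #|A| -> exists2 B : {set T}, B \subset A & #|B| = m.
Proof.
move=> le_mA; exists [set x in take m (enum A)].
  by apply/subsetP => x; rewrite inE => /mem_take; rewrite mem_enum.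
by rewrite cardsE (card_uniqP _) ?take_uniq ?enum_uniq // size_takel -?cardE.
Qed.

Lemma leq_sub_cardsD A B : #|A| - #|B| <= #|A :\: B|.
Proof. by rewrite cardsD leq_sub2l // subset_leq_card ?subsetIr. Qed.

Lemma exists_subset_card_setD A X m :
  m + #|X| <= #|A| -> exists2 B : {set T}, B \subset A :\: X & #|B| = m.
Proof.
move=> le_mXA; apply/exists_subset_card/(leq_trans _ (leq_sub_cardsD _ _)).
by rewrite leq_subRL ?(leq_trans (leq_addl _ _) le_mXA) // addnC.
Qed.

Lemma card_bigcup_le (I : finType) (P : pred I) (F : I -> {set T}) a :
  (forall i, P i -> #|F i| <= a) -> #|\bigcup_(i | P i) F i| <= #|P| * a.
Proof.
move=> le_Fa; apply: (@leq_trans (\sum_(i | P i) #|F i|)).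
  elim/big_rec2: _ => [|i m U _ le_Um]; first by rewrite cards0.
  by rewrite (leq_trans (leq_card_setU _ _).1) ?leq_add2l.
by rewrite -sum_nat_const leq_sum.
Qed.

Lemma sum_card_disjoint_le (I : finType) (P : pred I) (F : I -> {set T}) (D : {set T}) :
  (forall i, P i -> F i \subset D) ->
  (forall i j x, P i -> P j -> x \in F i -> x \in F j -> i = j) ->
  \sum_(i | P i) #|F i| <= #|D|.
Proof.
move=> sub_FD uniq_F.
have card_sum i : P i -> #|F i| = \sum_(x in D) (x \in F i).
  move=> Pi; rewrite -sum1_card big_mkcond [RHS]big_mkcond /=; apply: eq_bigr => x _.
  case xF: (x \in F i); last by case: (x \in D).
  by rewrite (subsetP (sub_FD i Pi) x xF).
have count_le1 x : \sum_(i | P i) (x \in F i) <= 1.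
  rewrite (eq_bigr (fun i => if x \in F i then 1 else 0)); last first.
    by move=> i _; case: (x \in F i).
  rewrite -big_mkcondr sum1_card; apply/card_le1_eqP => i j.
  by move=> /andP[Pi xFi] /andP[Pj xFj]; apply: uniq_F xFj xFi.
rewrite (eq_bigr _ card_sum) exchange_big /= -sum1_card.
exact: leq_sum.
Qed.

Lemma greedy_disjoint_family (I : finType) (P : I -> {set T} -> Prop) a
    (s : seq I) :
  (forall i A, P i A -> #|A| <= a) ->
  (forall i U, i \in s -> #|U| <= size s * a ->
     exists2 A, P i A & [disjoint A & U]) ->
  exists F : I -> {set T}, (forall i, i \in s -> P i (F i)) /\
    (forall i j, i \in s -> j \in s -> i != j -> [disjoint F i & F j]).
Proof.
move=> le_Pa; elim: s => [|i s IHs] exP; first by exists (fun=> set0).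
have [|F [PF disjF]] := IHs.
  move=> j U js le_U; apply: exP; first by rewrite inE js orbT.
  by rewrite (leq_trans le_U) // leq_mul2r leqnSn orbT.
have [|A PA disjA] := exP i (\bigcup_(j in s) F j) (mem_head _ _).
  apply: leq_trans (card_bigcup_le (a := a) _) _ => [j /PF/le_Pa //|].
  by rewrite leq_mul2r (leq_trans (card_size s)) ?leqnSn ?orbT.
have disjAF j : j \in s -> [disjoint A & F j].
  by move=> js; apply: disjointWr disjA; apply: (bigcup_sup j).
exists (fun j => if j == i then A else F j); split.
  by move=> j; rewrite inE; case: eqP => [-> | _ /PF].
move=> j1 j2; rewrite !inE.
have [-> | ne1] := eqVneq j1 i; have [-> | ne2] := eqVneq j2 i => //=.
- by move=> _ /disjAF.
- by move=> /disjAF; rewrite disjoint_sym.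
- exact: disjF.
Qed.

End FinsetFacts.

Definition nbr n (G : graph n) (v : 'I_n) : {set 'I_n} := [set u | G (v, u)].

Section StarForest.
Variables (n k : nat) (d : nat -> nat) (G : graph n).
Hypothesis G_sym : forall x y, G (x, y) = G (y, x).

Lemma star_forest_copy (c : 'I_k -> 'I_n) (L : 'I_k -> {set 'I_n}) :
  injective c ->
  (forall i, L i \subset nbr G (c i)) ->
  (forall i : 'I_k, d i <= #|L i|) ->
  (forall i j, c j \notin L i) ->
  (forall i j, i != j -> [disjoint L i & L j]) ->
  contains_copy (@star_forest_rel k d) G.
Proof.
move=> c_inj L_nbr L_card c_notin L_disj.
pose leaf (i : 'I_k) (j : 'I_(d i)) : 'I_n := enum_val (widen_ord (L_card i) j).
have leafP i j : leaf i j \in L i by apply: enum_valP.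
have nbr_leaf i j : G (c i, leaf i j).
  by have := subsetP (L_nbr i) _ (leafP i j); rewrite inE.
pose f (u : star_forest_vertex k d) : 'I_n :=
  let: existT i o := u in if o is Some j then leaf i j else c i.
apply/existsP; exists [ffun u => f u]; apply/andP; split.
- apply/injectiveP => -[i [j|]] [i' [j'|]]; rewrite !ffunE /=.
  + have [ii' | ne_ii'] := eqVneq i i'.
      by subst i'; move/enum_val_inj/(congr1 val) => /= /val_inj ->.
    move=> eq_leaf; have := disjointFr (L_disj _ _ ne_ii') (leafP i j).
    by rewrite eq_leaf leafP.
  + by move=> eq_leaf; have := c_notin i i'; rewrite -eq_leaf leafP.
  + by move=> eq_leaf; have := c_notin i' i; rewrite eq_leaf leafP.
  + by move/c_inj ->.
- apply/forallP => -[i o]; apply/forallP => -[i' o']; rewrite !ffunE.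
  apply/implyP; rewrite /star_forest_rel /= => /andP[/eqP ii']; subst i'.
  by case: o => [j|]; case: o' => [j'|] //= _; rewrite G_sym nbr_leaf.
Qed.

Lemma exists_disjoint_leaf_sets (c : 'I_k -> 'I_n) (S : {set 'I_k})
    (X : {set 'I_n}) (D : nat) :
  (forall i : 'I_k, d i <= D) ->
  (forall i, i \notin S -> #|X| + k * D + D <= #|nbr G (c i)|) ->
  exists F : 'I_k -> {set 'I_n},
    (forall i, i \notin S -> F i \subset nbr G (c i) :\: X /\ #|F i| = d i) /\
    (forall i j, i \notin S -> j \notin S -> i != j -> [disjoint F i & F j]).
Proof.
move=> d_le c_deg.
pose leaf_set (i : 'I_k) (A : {set 'I_n}) := A \subset nbr G (c i) :\: X /\ #|A| = d i.
have leaf_set_card i A : leaf_set i A -> #|A| <= D by move=> [_ ->].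
have leaf_set_avoid i (U : {set 'I_n}) :
    i \in enum (~: S) -> #|U| <= size (enum (~: S)) * D ->
    exists2 A, leaf_set i A & [disjoint A & U].
  rewrite mem_enum inE => iS card_U.
  have card_XU : #|X :|: U| <= #|X| + k * D.
    apply: leq_trans (leq_card_setU X U).1 (leq_add (leqnn _) (leq_trans card_U _)).
    by rewrite leq_mul2r -cardE (leq_trans (max_card _)) ?card_ord ?orbT.
  have [|A sub_A card_A] := @exists_subset_card_setD _ (nbr G (c i)) (X :|: U) (d i).
    by rewrite addnC (leq_trans _ (c_deg i iS)) // leq_add.
  exists A.
    by split=> //; apply: subset_trans sub_A (setDS _ (subsetUl _ _)).
  by apply: disjointWl sub_A _; rewrite disjoints_subset setDE setCU setIA subsetIr.
have [F [F_leaf F_disj]] := greedy_disjoint_family leaf_set_card leaf_set_avoid.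
by exists F; split=> [i iS | i j iS jS]; [apply: F_leaf | apply: F_disj];
  rewrite ?mem_enum ?inE.
Qed.

(* The degree bound leaves room for the k centres, the at most k * D prescribed
   leaves, the at most k * D leaves chosen before and the D leaves needed. *)
Lemma star_forest_copy_completion (c : 'I_k -> 'I_n) (S : {set 'I_k})
    (L : 'I_k -> {set 'I_n}) (D : nat) :
  injective c ->
  (forall i : 'I_k, d i <= D) ->
  (forall i, i \in S -> L i \subset nbr G (c i)) ->
  (forall i, i \in S -> #|L i| = d i) ->
  (forall i j, i \in S -> c j \notin L i) ->
  (forall i j, i \in S -> j \in S -> i != j -> [disjoint L i & L j]) ->
  (forall i, i \notin S -> k + k * D + k * D + D <= #|nbr G (c i)|) ->
  contains_copy (@star_forest_rel k d) G.
Proof.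
move=> c_inj d_le L_nbr L_card c_notin L_disj c_deg.
set X := [set c i | i in 'I_k] :|: \bigcup_(i in S) L i.
have card_X : #|X| <= k + k * D.
  apply: leq_trans (leq_card_setU _ _).1 _; apply: leq_add.
    by rewrite (leq_trans (leq_imset_card _ _)) ?card_ord.
  apply: leq_trans (card_bigcup_le (a := D) _) _ => [i /L_card -> //|].
  by rewrite leq_mul2r (leq_trans (max_card _)) ?card_ord ?orbT.
have [|F [F_leaf F_disj]] := @exists_disjoint_leaf_sets c S X D d_le.
  by move=> i iS; rewrite (leq_trans _ (c_deg i iS)) // !leq_add2r.
have disj_XF (B : {set 'I_n}) i : B \subset X -> i \notin S -> [disjoint B & F i].
  move=> sub_B /F_leaf [sub_F _]; apply: disjointWl sub_B _.
  rewrite disjoint_sym; apply: disjointWl sub_F _.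
  by rewrite disjoints_subset setDE subsetIr.
have L_sub_X i : i \in S -> L i \subset X.
  by move=> iS; rewrite subsetU // (bigcup_sup i) ?orbT.
apply: (@star_forest_copy c (fun i => if i \in S then L i else F i)) => //.
- move=> i; case: ifPn => [/L_nbr // | /F_leaf [sub_F _]].
  exact: subset_trans sub_F (subsetDl _ _).
- by move=> i; case: ifPn => [/L_card -> // | /F_leaf [_ ->]].
- move=> i j; case: ifPn => [/c_notin // | iS].
  by rewrite -disjoints1 disj_XF // sub1set inE imset_f.
- move=> i j ne; case: ifPn => iS; case: ifPn => jS.
  + exact: L_disj.
  + exact: disj_XF (L_sub_X _ iS) jS.
  + by rewrite disjoint_sym; apply: disj_XF (L_sub_X _ jS) iS.
  + exact: F_disj.
Qed.

End StarForest.

Lemma hub_centers n k (B : {set 'I_n}) (t : 'I_k -> 'I_n) :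
  {in [pred i : 'I_k | #|B| <= i] &, injective t} ->
  (forall i : 'I_k, #|B| <= i -> t i \notin B) ->
  exists c : 'I_k -> 'I_n, [/\ injective c,
    forall i : 'I_k, i < #|B| -> c i \in B &
    forall i : 'I_k, #|B| <= i -> c i = t i].
Proof.
move=> t_inj t_out.
pose c (i : 'I_k) := if i < #|B| then nth (t i) (enum B) i else t i.
have cB (i : 'I_k) : i < #|B| -> c i \in B.
  by move=> iB; rewrite /c iB -mem_enum mem_nth -?cardE.
have ct (i : 'I_k) : #|B| <= i -> c i = t i by rewrite /c ltnNge => ->.
exists c; split=> // i j.
case: (ltnP i #|B|) => [iB | Bi]; case: (ltnP j #|B|) => [jB | Bj].
- rewrite /c iB jB (set_nth_default (t i) (t j)) -?cardE // => /eqP.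
  by rewrite nth_uniq -?cardE ?enum_uniq // => /eqP/val_inj.
- by move=> eq_c; have := t_out j Bj; rewrite -ct // -eq_c cB.
- by move=> eq_c; have := t_out i Bi; rewrite -ct // eq_c cB.
- by rewrite !ct // => /t_inj; apply; rewrite inE.
Qed.

Definition cliques n (G : graph n) (r : nat) : {set {set 'I_n}} :=
  [set Q : {set 'I_n} | (#|Q| == r) &&
     [forall x in Q, forall y in Q, (x != y) ==> G (x, y)]].

Lemma num_KrE n (G : graph n) r : num_Kr G r = #|cliques G r|.
Proof. by []. Qed.

Lemma simple_graph_irr n (G : graph n) : simple_graph G -> forall x, ~~ G (x, x).
Proof. by case/andP => /forallP. Qed.

Lemma simple_graph_sym n (G : graph n) :
  simple_graph G -> forall x y, G (x, y) = G (y, x).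
Proof. by case/andP => _ /forallP G_sym x y; apply/eqP/(forallP (G_sym x)). Qed.

Section Cliques.
Variables (n r : nat) (G : graph n).

Lemma clique_card Q : Q \in cliques G r -> #|Q| = r.
Proof. by rewrite inE => /andP[/eqP]. Qed.

Lemma clique_sub_nbr Q u : Q \in cliques G r -> u \in Q -> Q \subset u |: nbr G u.
Proof.
rewrite inE => /andP[_ /forall_inP Q_cl] uQ; apply/subsetP => x xQ.
rewrite !inE; case: eqVneq => //= xu.
by have /forall_inP/(_ x xQ)/implyP := Q_cl u uQ; apply; rewrite eq_sym.
Qed.

Lemma card_clique_setD Q (B : {set 'I_n}) :
  Q \in cliques G r -> r - #|B| <= #|Q :\: B|.
Proof. by move/clique_card <-; apply: leq_sub_cardsD. Qed.

Lemma clique_subset_star Q (A : {set 'I_n}) u :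
  Q \in cliques G r -> A \subset Q -> u \in A -> A :\ u \subset nbr G u.
Proof.
move=> Q_cl AQ uA; apply/subsetP => x /setD1P[xu xA].
have := subsetP (clique_sub_nbr Q_cl (subsetP AQ u uA)) x (subsetP AQ x xA).
by rewrite in_setU1 (negbTE xu).
Qed.

End Cliques.

Section StarForestFreeGraph.
Variables (n k r : nat) (d : nat -> nat) (G : graph n).
Hypothesis G_simple : simple_graph G.
Hypothesis G_free : ~~ contains_copy (@star_forest_rel k d) G.
Hypothesis k_gt0 : 0 < k.
Hypothesis d_mono : forall i j, i <= j -> j < k -> d j <= d i.
Hypothesis d0_gt0 : 0 < d 0.
Hypothesis r_ge : d 0 + k.-1 <= r.

Let G_sym := simple_graph_sym G_simple.

Lemma d_le_d0 (i : 'I_k) : d i <= d 0.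
Proof. exact: d_mono. Qed.

Lemma d_last_le_d0 : d k.-1 <= d 0.
Proof. by apply: d_mono; rewrite ?ltn_predL. Qed.

Lemma k1_le_r : k.-1 <= r.
Proof. exact: leq_trans (leq_addl _ _) r_ge. Qed.

Lemma d0_le_r : d 0 <= r - k.-1.
Proof. by rewrite leq_subRL 1?addnC // k1_le_r. Qed.

Definition hub_degree := k + k * d 0 + k * d 0 + d 0.

Definition hubs := [set v | hub_degree <= #|nbr G v|].

Lemma card_hubs_lt : #|hubs| < k.
Proof.
rewrite ltnNge; apply/negP => /exists_subset_card [B sub_B card_B].
have [x xB] : exists x, x \in B.
  by apply/card_gt0P; rewrite card_B.
have [||c [c_inj c_hub _]] := hub_centers (t := fun=> x) (B := B) (k := k).
- by move=> i j; rewrite inE card_B leqNgt ltn_ord.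
- by move=> i; rewrite card_B leqNgt ltn_ord.
have c_hubs i : c i \in hubs by apply/(subsetP sub_B)/c_hub; rewrite card_B.
move/negP: G_free; apply.
apply: (star_forest_copy_completion G_sym (S := set0) (L := fun=> set0)
          (D := d 0) c_inj) => [i|i|i|i j|i j|i _]; rewrite ?inE //.
- exact: d_le_d0.
- by have := c_hubs i; rewrite inE.
Qed.

Section KMinusOneHubs.
Hypothesis card_hubs : #|hubs| = k.-1.

Lemma card_nbr_outside_hubs v : v \notin hubs -> #|nbr G v :\: hubs| < d k.-1.
Proof.
move=> v_out; rewrite ltnNge; apply/negP => /exists_subset_card [A sub_A card_A].
have last_ord (i : 'I_k) : k.-1 <= i -> nat_of_ord i = k.-1.
  by have := ltn_ord i; lia.
have [i j|i|c [c_inj c_hub c_v]] := hub_centers (B := hubs) (t := fun=> v) (k := k).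
- rewrite !inE card_hubs => ki kj _.
  by apply: val_inj => /=; rewrite (last_ord i ki) (last_ord j kj).
- by [].
have A_out x : x \in A -> x \notin hubs by move/(subsetP sub_A); rewrite inE => /andP[].
move/negP: G_free; apply.
apply: (star_forest_copy_completion G_sym (S := [set i : 'I_k | k.-1 <= i])
          (L := fun=> A) (D := d 0) c_inj).
- exact: d_le_d0.
- move=> i; rewrite inE -card_hubs => /c_v ->.
  exact: subset_trans sub_A (subsetDl _ _).
- by move=> i; rewrite inE => ki; rewrite card_A (last_ord i ki).
- move=> i j _; case: (ltnP j #|hubs|) => [/c_hub hub_j | /c_v ->].
    by apply: contraTN hub_j => /A_out.
  apply/negP => /(subsetP sub_A); rewrite !inE => /andP[_].
  by rewrite (negbTE (simple_graph_irr G_simple v)).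
- move=> i j; rewrite !inE => ki kj.
  suff -> : i = j by rewrite eqxx.
  by apply: val_inj => /=; rewrite (last_ord i ki) (last_ord j kj).
- by move=> i; rewrite inE -ltnNge -card_hubs => /c_hub; rewrite inE.
Qed.

Lemma clique_eq_of_nonhub Q u :
  Q \in cliques G r -> u \in Q -> u \notin hubs -> Q = hubs :|: (u |: nbr G u).
Proof.
move=> Q_cl uQ u_out.
have sub_O : (Q :\: hubs) :\ u \subset nbr G u :\: hubs.
  apply/subsetP => x; rewrite !inE => /and3P[xu x_out xQ]; rewrite x_out /=.
  by have := subsetP (clique_sub_nbr Q_cl uQ) x xQ; rewrite !inE (negbTE xu).
(* r - (k-1) <= |Q \ hubs| <= 1 + |N(u) \ hubs| <= d_k <= r - (k-1) is tight. *)
have card_O : #|Q :\: hubs| = (#|(Q :\: hubs) :\ u|).+1.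
  by rewrite (cardsD1 u (Q :\: hubs)) in_setD uQ u_out.
have small_O := card_nbr_outside_hubs u_out.
have card_O_eq : #|Q :\: hubs| = r - k.-1.
  apply/eqP; rewrite eqn_leq -{2}card_hubs (card_clique_setD hubs Q_cl) andbT.
  rewrite card_O (leq_trans (leq_ltn_trans (subset_leq_card sub_O) small_O)) //.
  exact: leq_trans d_last_le_d0 d0_le_r.
have O_eq : (Q :\: hubs) :\ u = nbr G u :\: hubs.
  apply/eqP; rewrite eqEcard sub_O -ltnS -card_O card_O_eq.
  exact: leq_trans small_O (leq_trans d_last_le_d0 d0_le_r).
have hubs_sub : hubs \subset Q.
  apply/setIidPr/eqP; rewrite eqEcard subsetIr /= card_hubs.
  have := cardsID hubs Q; rewrite (clique_card Q_cl) card_O_eq.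
  by rewrite -{2}(subnKC k1_le_r) => /addIn ->.
apply/setP => x; rewrite in_setU.
case: (boolP (x \in hubs)) => [/(subsetP hubs_sub) -> // | x_out] /=.
move/setP: O_eq => /(_ x); rewrite !in_setD1 !in_setD x_out in_setU1.
by case: eqVneq => [-> | _] //=; rewrite inE.
Qed.

Lemma num_Kr_k1_hubs : num_Kr G r * (r - k.-1) <= n - k.-1.
Proof.
have cliqueE Q u : Q \in cliques G r -> u \in Q :\: hubs ->
    Q = hubs :|: (u |: nbr G u).
  by move=> Q_cl; rewrite in_setD => /andP[u_out uQ]; apply: clique_eq_of_nonhub.
have card_outside Q : Q \in cliques G r -> #|Q :\: hubs| = r - k.-1.
  move=> Q_cl; have [u uO] : exists u, u \in Q :\: hubs.
    apply/card_gt0P; rewrite (leq_trans _ (card_clique_setD hubs Q_cl)) //.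
    by rewrite card_hubs (leq_trans d0_gt0 d0_le_r).
  rewrite cardsD (clique_card Q_cl) (setIidPr _) ?card_hubs //.
  by rewrite (cliqueE Q u) // subsetUl.
rewrite num_KrE -sum_nat_const -(eq_bigr _ card_outside).
apply: leq_trans (sum_card_disjoint_le (D := ~: hubs) _ _) _.
- by move=> Q _; apply/subsetP => x; rewrite !inE => /andP[].
- by move=> Q1 Q2 x Q1_cl Q2_cl /(cliqueE _ _ Q1_cl) -> /(cliqueE _ _ Q2_cl) ->.
- by rewrite cardsCs setCK card_ord card_hubs.
Qed.

End KMinusOneHubs.

Lemma card_cliques_through u :
  u \notin hubs -> #|[set Q in cliques G r | u \in Q]| <= 2 ^ hub_degree.
Proof.
move=> u_out; apply: (@leq_trans #|powerset (u |: nbr G u)|).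
  apply/subset_leq_card/subsetP => Q /setIdP[Q_cl uQ].
  by rewrite powersetE (clique_sub_nbr Q_cl uQ).
rewrite card_powerset leq_exp2l // cardsU1.
apply: leq_trans (leq_add (leq_b1 _) (leqnn _)) _.
by move: u_out; rewrite add1n inE -ltnNge.
Qed.

Lemma exists_clique_avoiding (U : {set 'I_n}) :
  #|U| * 2 ^ hub_degree < #|cliques G r| ->
  exists2 Q, Q \in cliques G r & [disjoint Q :\: hubs & U].
Proof.
move=> many.
pose bad := \bigcup_(u in U :\: hubs) [set Q in cliques G r | u \in Q].
have : ~~ (cliques G r \subset bad).
  apply: contraL many => /subset_leq_card card_le; rewrite -leqNgt.
  apply: leq_trans card_le (leq_trans (card_bigcup_le (a := 2 ^ hub_degree) _) _).
    by move=> u; rewrite in_setD => /andP[u_out _]; apply: card_cliques_through.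
  by rewrite leq_mul2r subset_leq_card ?subsetDl ?orbT.
case/subsetPn => Q Q_cl Q_good; exists Q => //.
rewrite disjoints_subset; apply/subsetP => x; rewrite in_setD in_setC.
move=> /andP[x_out xQ]; apply: contra Q_good => xU.
by apply/bigcupP; exists x; [rewrite in_setD x_out | apply/setIdP].
Qed.

Lemma disjoint_clique_parts :
  #|hubs| < k.-1 -> k * r * 2 ^ hub_degree < #|cliques G r| ->
  exists F : 'I_k -> {set 'I_n},
    (forall i : 'I_k, #|hubs| <= i -> exists2 Q, Q \in cliques G r &
       F i \subset Q :\: hubs /\ #|F i| = (d i).+1) /\
    (forall i j : 'I_k, #|hubs| <= i -> #|hubs| <= j -> i != j ->
       [disjoint F i & F j]).
Proof.
move=> hubs_lt many.
pose clique_piece (i : 'I_k) (A : {set 'I_n}) :=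
  exists2 Q, Q \in cliques G r & A \subset Q :\: hubs /\ #|A| = (d i).+1.
pose nonhub_stars := enum [set i : 'I_k | #|hubs| <= i].
have piece_card i A : clique_piece i A -> #|A| <= r.
  case=> Q /clique_card <- [sub_A _].
  exact/subset_leq_card/(subset_trans sub_A)/subsetDl.
have piece_avoid i (U : {set 'I_n}) :
    i \in nonhub_stars -> #|U| <= size nonhub_stars * r ->
    exists2 A, clique_piece i A & [disjoint A & U].
  move=> _ card_U.
  have [|Q Q_cl disj_Q] := exists_clique_avoiding (U := U).
    apply: leq_ltn_trans many; rewrite leq_mul2r (leq_trans card_U) ?orbT //.
    by rewrite leq_mul2r -cardE (leq_trans (max_card _)) ?card_ord ?orbT.
  have [|A sub_A card_A] := @exists_subset_card_setD _ Q hubs (d i).+1.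
    by rewrite (clique_card Q_cl) (leq_trans _ r_ge) // addSnnS leq_add ?d_le_d0.
  exists A; first by exists Q.
  exact: disjointWl sub_A disj_Q.
have [F [F_piece F_disj]] := greedy_disjoint_family piece_card piece_avoid.
by exists F; split=> [i hub_i | i j hub_i hub_j]; [apply: F_piece | apply: F_disj];
  rewrite ?mem_enum ?inE.
Qed.

Lemma num_Kr_few_hubs :
  #|hubs| < k.-1 -> num_Kr G r <= k * r * 2 ^ hub_degree.
Proof.
move=> hubs_lt; rewrite num_KrE leqNgt; apply: contra G_free => many.
have [F [F_piece F_disj]] := disjoint_clique_parts hubs_lt many.
have [Q0 Q0_cl] : exists Q, Q \in cliques G r.
  by apply/card_gt0P; apply: leq_ltn_trans many.
have [x0 _] : exists x, x \in Q0.
  apply/card_gt0P; rewrite (clique_card Q0_cl).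
  exact: leq_trans d0_gt0 (leq_trans d0_le_r (leq_subr _ _)).
have F_out (i : 'I_k) : #|hubs| <= i -> F i \subset ~: hubs.
  by case/F_piece => Q _ [sub_F _]; apply: subset_trans sub_F _; rewrite setDE subsetIr.
pose t (i : 'I_k) := nth x0 (enum (F i)) 0.
have tF (i : 'I_k) : #|hubs| <= i -> t i \in F i.
  by case/F_piece => Q _ [_ card_F]; rewrite -mem_enum mem_nth // -cardE card_F.
have [i j hi hj eq_t|i hi|c [c_inj c_hub c_t]] := hub_centers (B := hubs) (t := t).
- apply/eqP; apply: contraT => ne; rewrite !inE in hi hj.
  by have := disjointFr (F_disj _ _ hi hj ne) (tF i hi); rewrite eq_t tF.
- by have := subsetP (F_out i hi) _ (tF i hi); rewrite inE.
have cF (i : 'I_k) : #|hubs| <= i -> c i \in F i by move=> hi; rewrite c_t ?tF.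
apply: (star_forest_copy_completion G_sym (S := [set i : 'I_k | #|hubs| <= i])
          (L := fun i => F i :\ c i) (D := d 0) c_inj).
- exact: d_le_d0.
- move=> i; rewrite inE => hi; have [Q Q_cl [sub_F _]] := F_piece i hi.
  exact: clique_subset_star Q_cl (subset_trans sub_F (subsetDl _ _)) (cF i hi).
- move=> i; rewrite inE => hi; have [Q _ [_ card_F]] := F_piece i hi.
  by apply/eqP; rewrite -eqSS -card_F [#|F i|](cardsD1 (c i)) cF.
- move=> i j; rewrite inE => hi; rewrite in_setD1 negb_and negbK.
  case: (ltnP j #|hubs|) => [/c_hub hub_j | hj].
    by apply/orP; right; apply: contraL hub_j => /(subsetP (F_out i hi)); rewrite inE.
  have [-> | ne] := eqVneq j i; first by rewrite eqxx.
  by rewrite (disjointFr (F_disj _ _ hj hi ne) (cF j hj)) orbT.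
- move=> i j; rewrite !inE => hi hj ne.
  exact: disjointW (subD1set _ _) (subD1set _ _) (F_disj _ _ hi hj ne).
- by move=> i; rewrite inE -ltnNge => /c_hub; rewrite inE.
Qed.

Lemma num_Kr_star_forest_free :
  num_Kr G r <= k * r * 2 ^ hub_degree \/ num_Kr G r * (r - k.-1) <= n - k.-1.
Proof.
case: (ltngtP #|hubs| k.-1) => [lt_hubs | gt_hubs | eq_hubs].
- by left; apply: num_Kr_few_hubs.
- by have := card_hubs_lt; rewrite -(prednK k_gt0) ltnS leqNgt gt_hubs.
- by right; apply: num_Kr_k1_hubs.
Qed.

End StarForestFreeGraph.

Local Open Scope ring_scope.

Lemma le_turan_term (R : numFieldType) (m n r i d : nat) :
  (i < r)%N -> (i <= n)%N -> (1 < d)%N -> (m * (r - i) <= n - i)%N ->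
  (m%:R : R) <= (d%:R - 1) / (r%:R - i%:R) * (n%:R - i%:R).
Proof.
move=> lt_ir le_in lt_1d le_m.
rewrite -(natrB _ (ltnW lt_1d)) -(natrB _ (ltnW lt_ir)) -(natrB _ le_in).
rewrite mulrAC ler_pdivlMr ?ltr0n ?subn_gt0 // -!natrM ler_nat.
by apply: leq_trans le_m _; rewrite leq_pmull // subn_gt0.
Qed.

Theorem corollary6p1 (k : nat) (d : nat -> nat) (r : nat) :
  (2 <= k)%N ->
  (forall i j : nat, (i <= j)%N -> (j < k)%N -> (d j <= d i)%N) ->
  (forall i : nat, (i < k)%N -> (2 <= d i)%N) ->
  (d 0%N + k - 1 <= r)%N ->
  exists N : nat, forall n : nat, (N <= n)%N ->
    ((ex_Kr n r (@star_forest_rel k d))%:R : rat) <=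
      \big[Num.max/0]_(i < k)
        (((d i)%:R - 1) / (r%:R - i%:R) * (n%:R - i%:R)).
Proof.
move=> k_ge2 d_mono d_ge2 r_ge.
have k_gt0 : (0 < k)%N by apply: leq_trans k_ge2.
have k1_lt_k : (k.-1 < k)%N by rewrite ltn_predL.
have d0_gt0 : (0 < d 0)%N by apply: leq_trans (d_ge2 0%N k_gt0).
have r_ge' : (d 0 + k.-1 <= r)%N by rewrite -subn1 addnBA.
exists (k * r * 2 ^ hub_degree k d * r + k)%N => n le_n.
apply: (big_ind (fun m : nat => (m%:R : rat) <= _)) => [|m1 m2|G /andP[G_simple G_free]].
- exact: bigmax_ge_id.
- by rewrite /maxn; case: ifP.
have [few | linear] := num_Kr_star_forest_free G_simple G_free k_gt0 d_mono d0_gt0 r_ge'.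
- apply: le_trans (le_bigmax _ _ (Ordinal k_gt0)); apply: le_turan_term => //=.
  + lia.
  + exact: d_ge2.
  + by rewrite !subn0 (leq_trans _ (leq_trans (leq_addr _ _) le_n)) // leq_mul2r few orbT.
- apply: le_trans (le_bigmax _ _ (Ordinal k1_lt_k)); apply: le_turan_term => //=.
  + lia.
  + lia.
  + exact: d_ge2.
Qed.
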